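(* Let $\mathcal{C},\mathcal{D}$ be fibration categories and $F\colon\mathcal{C}\rightleftarrows\mathcal{D}\colon G$ an adjoint pair ($F\dashv G$) of exact functors. If two morphisms $f,g\colon A\to GB$ are homotopic in $\mathcal{C}$, then their adjoint transposes $\overline{f},\overline{g}\colon FA\to B$ are homotopic in $\mathcal{D}$.
   Context: A fibration category is a category with wide subcategories of fibrations and weak equivalences such that: weak equivalences satisfy 2-out-of-6; isomorphisms are acyclic fibrations; pullbacks along fibrations exist and fibrations and acyclic fibrations are stable under pullback; there is a terminal object and all objects are fibrant; every map factors as a weak equivalence followed by a fibration. An exact functor preserves fibrations, acyclic fibrations, pullbacks along fibrations and the terminal object. Two morphisms are homotopic if they become equal in the homotopy category $\mathrm{Ho}\,\mathcal{C}$ (the localization at the weak equivalences). *)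

Set Implicit Arguments.
Unset Strict Implicit.

Record Category := {
  Ob :> Type;
  Hom : Ob -> Ob -> Type;
  idm : forall A, Hom A A;
  comp : forall A B C, Hom B C -> Hom A B -> Hom A C;
  comp_idl : forall A B (f : Hom A B), comp (idm B) f = f;
  comp_idr : forall A B (f : Hom A B), comp f (idm A) = f;
  comp_assoc : forall A B C D (f : Hom A B) (g : Hom B C) (h : Hom C D),
      comp h (comp g f) = comp (comp h g) f
}.
Arguments Hom {c} _ _.
Arguments idm {c} _.
Arguments comp {c A B C} _ _.

Definition is_iso (C : Category) (A B : C) (f : Hom A B) : Prop :=
  exists g : Hom B A, comp g f = idm A /\ comp f g = idm B.

Definition is_terminal (C : Category) (T : C) : Prop :=
  forall X : C, exists u : Hom X T, forall v : Hom X T, v = u.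

Definition is_pullback (C : Category) (P X Y Z : C)
  (p1 : Hom P X) (p2 : Hom P Y) (f : Hom X Z) (g : Hom Y Z) : Prop :=
  comp f p1 = comp g p2 /\
  forall (Q : C) (a : Hom Q X) (b : Hom Q Y), comp f a = comp g b ->
    exists u : Hom Q P, (comp p1 u = a /\ comp p2 u = b) /\
      forall v : Hom Q P, comp p1 v = a /\ comp p2 v = b -> v = u.

Record Functor (C D : Category) := {
  fobj :> C -> D;
  fmap : forall A B : C, Hom A B -> Hom (fobj A) (fobj B);
  fmap_id : forall A : C, fmap (idm A) = idm (fobj A);
  fmap_comp : forall (A B E : C) (f : Hom A B) (g : Hom B E),
      fmap (comp g f) = comp (fmap g) (fmap f)
}.
Arguments fmap {C D} _ {A B} _.

(** * Adjunctions  F -| G, given by natural bijections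
    Hom_D (F A, B) ~ Hom_C (A, G B). [transp] sends f : A -> G B to its
    adjoint transpose  F A -> B. *)
Record Adjunction (C D : Category) (F : Functor C D) (G : Functor D C) := {
  transp : forall (A : C) (B : D), Hom A (G B) -> Hom (F A) B;
  untransp : forall (A : C) (B : D), Hom (F A) B -> Hom A (G B);
  transpK : forall A B (f : Hom A (G B)), untransp (transp f) = f;
  untranspK : forall A B (h : Hom (F A) B), transp (untransp h) = h;
  untransp_natural : forall (A' A : C) (B B' : D)
      (a : Hom A' A) (h : Hom (F A) B) (k : Hom B B'),
      untransp (comp k (comp h (fmap F a))) = comp (fmap G k) (comp (untransp h) a)
}.
Arguments transp {C D F G} _ {A B} _.

Record FibCat := {
  fc_cat :> Category;
  fib : forall A B : fc_cat, Hom A B -> Prop;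
  we : forall A B : fc_cat, Hom A B -> Prop;
  term : fc_cat;
  fib_id : forall A, fib (idm A);
  fib_comp : forall A B E (f : Hom A B) (g : Hom B E), fib f -> fib g -> fib (comp g f);
  we_id : forall A, we (idm A);
  we_comp : forall A B E (f : Hom A B) (g : Hom B E), we f -> we g -> we (comp g f);
  we_2of6 : forall W X Y Z (f : Hom W X) (g : Hom X Y) (h : Hom Y Z),
      we (comp g f) -> we (comp h g) ->
      we f /\ we g /\ we h /\ we (comp h (comp g f));
  iso_acyclic_fib : forall A B (f : Hom A B), is_iso f -> fib f /\ we f;
  pullback_exists : forall X Y Z (p : Hom X Z) (g : Hom Y Z), fib p ->
      exists (P : fc_cat) (p1 : Hom P X) (p2 : Hom P Y), is_pullback p1 p2 p g;
  fib_pullback : forall P X Y Z (p1 : Hom P X) (p2 : Hom P Y) (p : Hom X Z) (g : Hom Y Z),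
      is_pullback p1 p2 p g -> fib p -> fib p2;
  acyclic_fib_pullback : forall P X Y Z (p1 : Hom P X) (p2 : Hom P Y) (p : Hom X Z) (g : Hom Y Z),
      is_pullback p1 p2 p g -> fib p -> we p -> fib p2 /\ we p2;
  term_terminal : is_terminal term;
  all_fibrant : forall X (u : Hom X term), fib u;
  factorization : forall X Y (f : Hom X Y),
      exists (Z : fc_cat) (w : Hom X Z) (p : Hom Z Y), we w /\ fib p /\ comp p w = f
}.
Arguments fib {_ A B} _.
Arguments we {_ A B} _.

Definition exact (C D : FibCat) (F : Functor C D) : Prop :=
  (forall A B (f : Hom A B), fib f -> fib (fmap F f)) /\
  (forall A B (f : Hom A B), fib f -> we f -> fib (fmap F f) /\ we (fmap F f)) /\
  (forall P X Y Z (p1 : Hom P X) (p2 : Hom P Y) (p : Hom X Z) (g : Hom Y Z),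
      is_pullback p1 p2 p g -> fib p ->
      is_pullback (fmap F p1) (fmap F p2) (fmap F p) (fmap F g)) /\
  is_terminal (F (term C)).

(** * Homotopy: equality in Ho C, the localization of C at the weak
    equivalences.  Two parallel maps are equal in the localization iff they
    are identified by every functor inverting the weak equivalences
    (universal property of the localization functor C -> Ho C). *)
Definition homotopic (C : FibCat) (A B : C) (f g : Hom A B) : Prop :=
  forall (E : Category) (H : Functor C E),
    (forall X Y (w : Hom X Y), we w -> is_iso (fmap H w)) ->
    fmap H f = fmap H g.

(* The transpose of h : A -> G B is the counit composed with F h, so it suffices
   that F sends homotopic maps to homotopic maps, i.e. that F preserves weak
   equivalences.  This is Ken Brown's lemma: a weak equivalence w : X -> Y is
   q j where j is a section of an acyclic fibration r and q is an acyclic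
   fibration (factor (w, id) : X -> Y x X as a weak equivalence j followed by a
   fibration and compose with the two projections); an exact functor preserves
   q, r and the equation r j = id, hence also j by 2-out-of-3. *)

Set Implicit Arguments.
Unset Strict Implicit.

Definition comp_functor (C D E : Category) (F : Functor C D) (H : Functor D E) :
  Functor C E.
Proof.
  refine {| fobj := fun X => H (F X); fmap := fun A B f => fmap H (fmap F f) |}.
  - intros A. rewrite !fmap_id. reflexivity.
  - intros A B A' f g. rewrite !fmap_comp. reflexivity.
Defined.

Lemma is_pullback_sym (C : Category) (P X Y Z : C)
  (p1 : Hom P X) (p2 : Hom P Y) (f : Hom X Z) (g : Hom Y Z) :
  is_pullback p1 p2 f g -> is_pullback p2 p1 g f.
Proof.
  intros [Hsq Huniv]. split; [symmetry; exact Hsq |].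
  intros Q a b Hab.
  destruct (Huniv Q b a (eq_sym Hab)) as [u [[Hu1 Hu2] Huniq]].
  exists u. split; [split; assumption |].
  intros v [Hv1 Hv2]. apply Huniq. split; assumption.
Qed.

Lemma terminal_hom_eq (C : Category) (T X : C) (u v : Hom X T) :
  is_terminal T -> u = v.
Proof.
  intros HT. destruct (HT X) as [t Ht]. rewrite (Ht u), (Ht v). reflexivity.
Qed.

Section WeakEquivalences.

Variable C : FibCat.

Lemma we_2of3_cancel_r (X Y Z : C) (f : Hom X Y) (h : Hom Y Z) :
  we f -> we (comp h f) -> we h.
Proof.
  intros Hf Hhf.
  destruct (@we_2of6 C X X Y Z (idm X) f h) as [_ [_ [Hh _]]]; auto.
  rewrite comp_idr. exact Hf.
Qed.

Lemma we_section (X Y : C) (j : Hom X Y) (r : Hom Y X) :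
  we r -> comp r j = idm X -> we j.
Proof.
  intros Hr Hrj.
  destruct (@we_2of6 C X Y X X j r (idm X)) as [Hj _]; auto.
  - rewrite Hrj. apply we_id.
  - rewrite comp_idl. exact Hr.
Qed.

Lemma we_factor_section_acyclic_fib (X Y : C) (w : Hom X Y) : we w ->
  exists (Z : C) (j : Hom X Z) (q : Hom Z Y) (r : Hom Z X),
    (fib q /\ we q) /\ (fib r /\ we r) /\ comp q j = w /\ comp r j = idm X.
Proof.
  intros Hw.
  destruct (@term_terminal C X) as [uX _].
  destruct (@term_terminal C Y) as [uY _].
  destruct (@pullback_exists C _ _ _ uY uX (all_fibrant uY))
    as [P [pY [pX Hpb]]].
  assert (HpX : fib pX) by (eapply fib_pullback; [exact Hpb | apply all_fibrant]).
  assert (HpY : fib pY).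
  { eapply fib_pullback; [apply is_pullback_sym; exact Hpb | apply all_fibrant]. }
  destruct Hpb as [_ Huniv].
  destruct (Huniv X w (idm X)) as [d [[HdY HdX] _]].
  { apply terminal_hom_eq, term_terminal. }
  destruct (factorization d) as [Z [j [p [Hj [Hp Hpj]]]]].
  exists Z, j, (comp pY p), (comp pX p).
  assert (Hq : comp (comp pY p) j = w) by (rewrite <- comp_assoc, Hpj; exact HdY).
  assert (Hr : comp (comp pX p) j = idm X) by (rewrite <- comp_assoc, Hpj; exact HdX).
  repeat split; try assumption.
  - apply fib_comp; assumption.
  - apply (we_2of3_cancel_r Hj). rewrite Hq. exact Hw.
  - apply fib_comp; assumption.
  - apply (we_2of3_cancel_r Hj). rewrite Hr. apply we_id.
Qed.

End WeakEquivalences.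

Lemma exact_preserves_we (C D : FibCat) (F : Functor C D) (hF : exact F)
  (X Y : C) (w : Hom X Y) : we w -> we (fmap F w).
Proof.
  intros Hw.
  destruct hF as [_ [Hacyclic _]].
  destruct (we_factor_section_acyclic_fib Hw)
    as [Z [j [q [r [[Hqf Hqw] [[Hrf Hrw] [Hqj Hrj]]]]]]].
  destruct (Hacyclic _ _ _ Hqf Hqw) as [_ HFq].
  destruct (Hacyclic _ _ _ Hrf Hrw) as [_ HFr].
  assert (HFj : we (fmap F j)).
  { apply (we_section HFr). rewrite <- fmap_comp, Hrj. apply fmap_id. }
  rewrite <- Hqj, fmap_comp. apply we_comp; assumption.
Qed.

Lemma homotopic_fmap (C D : FibCat) (F : Functor C D)
  (HF : forall X Y (w : Hom X Y), we w -> we (fmap F w))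
  (A B : C) (f g : Hom A B) :
  homotopic f g -> homotopic (fmap F f) (fmap F g).
Proof.
  intros Hfg E H HH.
  exact (Hfg E (comp_functor F H) (fun X Y w Hw => HH _ _ _ (HF _ _ _ Hw))).
Qed.

Lemma homotopic_comp_l (C : FibCat) (A B B' : C) (k : Hom B B') (f g : Hom A B) :
  homotopic f g -> homotopic (comp k f) (comp k g).
Proof.
  intros Hfg E H HH. rewrite !fmap_comp, (Hfg E H HH). reflexivity.
Qed.

Lemma transp_counit (C D : Category) (F : Functor C D) (G : Functor D C)
  (adj : Adjunction F G) (A : C) (B : D) (h : Hom A (G B)) :
  transp adj h = comp (transp adj (idm (G B))) (fmap F h).
Proof.
  pose proof (untransp_natural adj h (transp adj (idm (G B))) (idm B)) as Hnat.
  rewrite transpK, fmap_id, !comp_idl in Hnat.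
  transitivity (transp adj (untransp adj (comp (transp adj (idm (G B))) (fmap F h)))).
  - rewrite Hnat. reflexivity.
  - apply untranspK.
Qed.

Theorem lemma4p4 (C D : FibCat) (F : Functor C D) (G : Functor D C)
  (adj : Adjunction F G) (hF : exact F) (hG : exact G)
  (A : C) (B : D) (f g : Hom A (G B)) :
  homotopic f g -> homotopic (transp adj f) (transp adj g).
Proof.
  intros Hfg.
  rewrite (transp_counit adj f), (transp_counit adj g).
  apply homotopic_comp_l, homotopic_fmap; [| exact Hfg].
  exact (exact_preserves_we hF).
Qed.
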